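(* Let $\operatorname{Cs}(4)=\{x,y,z\}$ be the quandle with multiplication $xx=x$, $yy=y$, $zz=z$, $xy=x$, $xz=y$, $yx=y$, $yz=x$, $zx=z$, $zy=z$. Then the set of non-zero idempotents of the integral quandle ring $\mathbb{Z}[\operatorname{Cs}(4)]$ is $$I(\mathbb{Z}[\operatorname{Cs}(4)])=\big\{(1-\beta)x+\beta y,\ \alpha x+\alpha y+(1-2\alpha)z~|~\alpha,\beta\in\mathbb{Z}\big\}.$$
   Context: For a quandle $Q$, the quandle ring $\mathbb{Z}[Q]$ is the free abelian group with basis $Q$, with multiplication $\big(\sum_i\alpha_i q_i\big)\big(\sum_j\beta_j q_j\big)=\sum_{i,j}\alpha_i\beta_j (q_iq_j)$ extending the quandle operation bilinearly. $I(\mathbb{Z}[Q])$ denotes the set of non-zero elements $w$ with $w^2=w$. *)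

From mathcomp Require Import all_boot all_algebra.
Set Implicit Arguments. Unset Strict Implicit. Unset Printing Implicit Defensive.
Import GRing.Theory.
Local Open Scope ring_scope.

Inductive Cs4 : Type := cx | cy | cz.

Definition Cs4_enum : seq Cs4 := [:: cx; cy; cz].

Definition Cs4_eqb (a b : Cs4) : bool :=
  match a, b with
  | cx, cx | cy, cy | cz, cz => true
  | _, _ => false
  end.

Definition Cs4_op (a b : Cs4) : Cs4 :=
  match a, b with
  | cx, cx => cx | cy, cy => cy | cz, cz => cz
  | cx, cy => cx | cx, cz => cy
  | cy, cx => cy | cy, cz => cx
  | cz, cx => cz | cz, cy => cz
  end.

(* An element of the integral quandle ring Z[Cs(4)], given by its
   coefficient function (the basis Cs(4) is finite). *)
Definition ZQ := Cs4 -> int.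

Definition ZQ_mul (u v : ZQ) : ZQ :=
  fun r => \sum_(p <- Cs4_enum) \sum_(q <- Cs4_enum)
              (if Cs4_eqb (Cs4_op p q) r then u p * v q else 0).

Definition ZQ_of (a b c : int) : ZQ :=
  fun r => match r with cx => a | cy => b | cz => c end.

Definition is_nz_idempotent (w : ZQ) : Prop :=
  (exists r, w r <> 0) /\ (forall r, ZQ_mul w w r = w r).

From mathcomp Require Import all_boot all_algebra.
From mathcomp Require Import zify ring.
Set Implicit Arguments. Unset Strict Implicit. Unset Printing Implicit Defensive.
Import GRing.Theory.
Local Open Scope ring_scope.

(* Write w = a x + b y + c z.  Since the product of two basis elements is a
   basis element, the augmentation s = a + b + c is multiplicative, so an
   idempotent has s^2 = s, i.e. s = 0 or s = 1.  The z-coordinate of w^2 is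
   c s, hence s = 0 forces c = 0 and then a = b = 0.  When s = 1 the
   x-coordinate equation a (a + b) + b c = a becomes c (b - a) = 0, giving
   the two families c = 0, a + b = 1 and a = b, c = 1 - 2a. *)

Lemma ZQ_mulE (u v : ZQ) :
  [/\ ZQ_mul u v cx = u cx * v cx + u cx * v cy + u cy * v cz,
      ZQ_mul u v cy = u cx * v cz + u cy * v cx + u cy * v cy &
      ZQ_mul u v cz = u cz * (v cx + v cy + v cz)].
Proof. by rewrite /ZQ_mul /Cs4_enum !big_cons !big_nil /=; split; ring. Qed.

Lemma ZQ_ofP (w : ZQ) (a b c : int) :
  (forall r, w r = ZQ_of a b c r) <-> [/\ w cx = a, w cy = b & w cz = c].
Proof. by split=> [E | [? ? ?] []]; first split; rewrite ?E. Qed.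

Lemma ZQ_neq0P (w : ZQ) :
  (exists r, w r <> 0) <-> ~ [/\ w cx = 0, w cy = 0 & w cz = 0].
Proof.
split=> [[[] nz0] [? ? ?] // | nz0].
have [a0 | ?] := eqVneq (w cx) 0; last by exists cx; apply/eqP.
have [b0 | ?] := eqVneq (w cy) 0; last by exists cy; apply/eqP.
have [c0 | ?] := eqVneq (w cz) 0; last by exists cz; apply/eqP.
by case: nz0.
Qed.

Section Cs4Idempotents.
Variables (R : idomainType) (a b c : R).

Definition Cs4_idempotent_eqs : Prop :=
  [/\ a * a + a * b + b * c = a, a * c + b * a + b * b = b & c * (a + b + c) = c].

Lemma Cs4_idempotent_eqsP :
  Cs4_idempotent_eqs <->
  [\/ [/\ a = 0, b = 0 & c = 0], c = 0 /\ a + b = 1 | b = a /\ c = 1 - 2 * a].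
Proof.
rewrite /Cs4_idempotent_eqs.
split=> [[Ex Ey Ez] | [[-> -> ->] | [-> ab1] | [-> ->]]]; last first.
- by split; ring.
- by rewrite -[a](addrK b) ab1; split; ring.
- by split; ring.
have aug_idem : (a + b + c) * (a + b + c - 1) = 0.
  have -> : (a + b + c) * (a + b + c - 1) = (a * a + a * b + b * c - a)
      + (a * c + b * a + b * b - b) + (c * (a + b + c) - c) by ring.
  by rewrite Ex Ey Ez !subrr !addr0.
move/eqP: aug_idem; rewrite mulf_eq0 subr_eq0 => /orP [/eqP s0 | /eqP s1].
- have c0 : c = 0 by rewrite -Ez s0 mulr0.
  have ab0 : a + b = 0 by rewrite -s0 c0 addr0.
  have a0 : a = 0 by rewrite -Ex c0 mulr0 addr0 -mulrDr ab0 mulr0.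
  by constructor 1; split=> //; rewrite -ab0 a0 add0r.
have : c * (b - a) = 0.
  have -> : c * (b - a) = (a * a + a * b + b * c - a) - a * (a + b + c - 1) by ring.
  by rewrite Ex s1 !subrr mulr0 subr0.
move/eqP; rewrite mulf_eq0 subr_eq0 => /orP [/eqP c0 | /eqP ba].
- by constructor 2; rewrite -s1 c0 addr0.
- by constructor 3; split=> //; rewrite -[X in _ = X - _]s1 ba; ring.
Qed.

End Cs4Idempotents.

Lemma ZQ_idemP (w : ZQ) :
  (forall r, ZQ_mul w w r = w r) <-> Cs4_idempotent_eqs (w cx) (w cy) (w cz).
Proof.
have [Ex Ey Ez] := ZQ_mulE w w.
rewrite /Cs4_idempotent_eqs -Ex -Ey -Ez.
by split=> [E | [? ? ?] []]; first split; rewrite ?E.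
Qed.

Theorem proposition4p2 (w : ZQ) :
  is_nz_idempotent w <->
  ((exists beta : int, forall r, w r = ZQ_of (1 - beta) beta 0 r) \/
   (exists alpha : int, forall r, w r = ZQ_of alpha alpha (1 - 2 * alpha) r)).
Proof.
rewrite /is_nz_idempotent ZQ_neq0P ZQ_idemP Cs4_idempotent_eqsP.
split=> [[nz0 [//| [c0 ab1] | [ba c1]]] | [[beta] | [alpha]] /ZQ_ofP [-> -> ->]].
- by left; exists (w cy); apply/ZQ_ofP; rewrite -ab1 addrK.
- by right; exists (w cx); apply/ZQ_ofP.
- by split; [case; lia | constructor 2; rewrite subrK].
- by split; [case; lia | constructor 3].
Qed.
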